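(* Let $(G,\mathcal{B}_1,\mathcal{B}_2)$ be a Rota-Baxter system of groups. For any $a\in G$, $\mathcal{B}_1(a)\mathcal{B}_2(a)=1_G$ if and only if $\mathcal{B}_1(a)=1_G$ and $\mathcal{B}_2(a)=1_G$.
   Context: A Rota-Baxter system of groups is a triple $(G,\mathcal{B}_1,\mathcal{B}_2)$ where $G$ is a group with identity $1_G$ and $\mathcal{B}_1,\mathcal{B}_2:G\to G$ are maps such that for all $a,b\in G$: $\mathcal{B}_1(a)\mathcal{B}_1(b)=\mathcal{B}_1(\mathcal{B}_1(a)b\mathcal{B}_2(a))$ and $\mathcal{B}_2(b)\mathcal{B}_2(a)=\mathcal{B}_2(\mathcal{B}_1(a)b\mathcal{B}_2(a))$. *)

Record Group := {
  carrier :> Type;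
  gmul : carrier -> carrier -> carrier;
  ginv : carrier -> carrier;
  gone : carrier;
  gmul_assoc : forall a b c, gmul a (gmul b c) = gmul (gmul a b) c;
  gmul_one_l : forall a, gmul gone a = a;
  gmul_one_r : forall a, gmul a gone = a;
  gmul_inv_l : forall a, gmul (ginv a) a = gone;
  gmul_inv_r : forall a, gmul a (ginv a) = gone
}.

Arguments gmul {g} _ _.
Arguments ginv {g} _.
Arguments gone {g}.

Definition RotaBaxterSystem (G : Group) (B1 B2 : G -> G) : Prop :=
  forall a b : G,
    gmul (B1 a) (B1 b) = B1 (gmul (gmul (B1 a) b) (B2 a)) /\
    gmul (B2 b) (B2 a) = B2 (gmul (gmul (B1 a) b) (B2 a)).


(* Taking b = 1 in the two Rota-Baxter identities gives
   B1 a * B1 1 = B1 (B1 a * B2 a) and B2 1 * B2 a = B2 (B1 a * B2 a).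
   If B1 a * B2 a = 1, the right-hand sides are B1 1 and B2 1, and cancelling
   them leaves B1 a = 1 and B2 a = 1. *)

Lemma mul_eq_r_one {G : Group} {x y : G} : gmul x y = y -> x = gone.
Proof.
  intro Hxy.
  assert (E : gmul (gmul x y) (ginv y) = gmul y (ginv y)) by now rewrite Hxy.
  now rewrite <- gmul_assoc, !gmul_inv_r, gmul_one_r in E.
Qed.

Lemma mul_eq_l_one {G : Group} {x y : G} : gmul y x = y -> x = gone.
Proof.
  intro Hyx.
  assert (E : gmul (ginv y) (gmul y x) = gmul (ginv y) y) by now rewrite Hyx.
  now rewrite gmul_assoc, !gmul_inv_l, gmul_one_l in E.
Qed.

Lemma RotaBaxterSystem_at_one {G : Group} {B1 B2 : G -> G} :
  RotaBaxterSystem G B1 B2 -> forall a : G,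
    gmul (B1 a) (B1 gone) = B1 (gmul (B1 a) (B2 a)) /\
    gmul (B2 gone) (B2 a) = B2 (gmul (B1 a) (B2 a)).
Proof.
  intros HRB a.
  destruct (HRB a gone) as [H1 H2].
  now rewrite gmul_one_r in H1, H2.
Qed.

Theorem corollary4p5 (G : Group) (B1 B2 : G -> G)
  (HRB : RotaBaxterSystem G B1 B2) (a : G) :
  gmul (B1 a) (B2 a) = gone <-> (B1 a = gone /\ B2 a = gone).
Proof.
  split.
  - intro Hprod.
    destruct (RotaBaxterSystem_at_one HRB a) as [H1 H2].
    rewrite Hprod in H1, H2.
    split; [exact (mul_eq_r_one H1) | exact (mul_eq_l_one H2)].
  - intros [H1 H2]. rewrite H1, H2. apply gmul_one_l.
Qed.
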